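(* Let $\mathcal{R}^{rsc}$ be a rich single-crossing domain, let $\{R^n\}_{n\ge1}\subseteq\mathcal{R}^{rsc}$ converge to $R\in\mathcal{R}^{rsc}$ in the order topology, and let $(t^{1n},q^{1n})\to(t^1,q^1)$ and $(t^{2n},q^{2n})\to(t^2,q^2)$ be convergent sequences in $\mathbb{Z}$ (Euclidean topology). If $(t^{1n},q^{1n})\,I^n\,(t^{2n},q^{2n})$ for all $n$, where $I^n$ is the indifference relation of $R^n$, then $(t^1,q^1)\,I\,(t^2,q^2)$, where $I$ is the indifference relation of $R$.
   Context: $\mathbb{Z}=[0,\infty)\times[0,1]$. A classical preference is a complete transitive relation $R$ on $\mathbb{Z}$ (strict part $P$, indifference $I$) such that: for all $q$, $t''>t'$ implies $(t',q)P(t'',q)$; for all $t$, $q''>q'$ implies $(t,q'')P(t,q')$; upper and lower contour sets $\{x:xRz\},\{x:zRx\}$ are closed. Two distinct classical preferences satisfy single-crossing if any indifference set of one meets any indifference set of the other in at most one point. A rich single-crossing domain $\mathcal{R}^{rsc}$ is a set of pairwise single-crossing classical preferences such that for all $(t',q'),(t'',q'')$ with $t'<t''$, $q'<q''$ some member is indifferent between them. Writing $(t',q')<(t'',q'')$ for $t'<t''$, $q'<q''$ and $\square(z)=\{x:x=z\text{ or }x<z\}$, for distinct $R',R''$ in the domain, $R'\prec R''$ means $\square(z)\cap\{x:xR''z\}\subseteq\square(z)\cap\{x:xR'z\}$ for every $z$. $\prec$ is a linear order, and $\mathcal{R}^{rsc}$ carries the associated order topology. *)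

From Stdlib Require Import Reals.
From Coquelicot Require Import Coquelicot.
Open Scope R_scope.

Definition pt := (R * R)%type.
Definition inZ (x : pt) : Prop := 0 <= fst x /\ 0 <= snd x <= 1.

(* A (weak) preference relation; [pref_rel R x y] reads "x R y". *)
Definition pref := pt -> pt -> Prop.

Definition strict (Rl : pref) (x y : pt) : Prop := Rl x y /\ ~ Rl y x.
Definition indiff (Rl : pref) (x y : pt) : Prop := Rl x y /\ Rl y x.

(* Contour sets are subsets of Z; since Z is closed in R^2,
   being closed in Z is the same as being closed in R^2 (Coquelicot [closed]). *)
Definition classical (Rl : pref) : Prop :=
  (forall x y, Rl x y -> inZ x /\ inZ y) /\
  (forall x y, inZ x -> inZ y -> Rl x y \/ Rl y x) /\
  (forall x y z, Rl x y -> Rl y z -> Rl x z) /\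
  (forall t1 t2 q, inZ (t1, q) -> inZ (t2, q) -> t2 > t1 ->
      strict Rl (t1, q) (t2, q)) /\
  (forall t q1 q2, inZ (t, q1) -> inZ (t, q2) -> q2 > q1 ->
      strict Rl (t, q2) (t, q1)) /\
  (forall z, inZ z -> closed (fun x : R * R => Rl x z)) /\
  (forall z, inZ z -> closed (fun x : R * R => Rl z x)).

Definition single_crossing (R1 R2 : pref) : Prop :=
  forall z1 z2 x y, inZ z1 -> inZ z2 -> inZ x -> inZ y ->
    indiff R1 x z1 -> indiff R2 x z2 ->
    indiff R1 y z1 -> indiff R2 y z2 -> x = y.

Definition ltZ (x y : pt) : Prop := fst x < fst y /\ snd x < snd y.

Definition rich_single_crossing (D : pref -> Prop) : Prop :=
  (forall Rl, D Rl -> classical Rl) /\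
  (forall R1 R2, D R1 -> D R2 -> R1 <> R2 -> single_crossing R1 R2) /\
  (forall x y, inZ x -> inZ y -> ltZ x y ->
     exists Rl, D Rl /\ indiff Rl x y).

Definition box (z x : pt) : Prop := x = z \/ ltZ x z.

Definition prec (R1 R2 : pref) : Prop :=
  R1 <> R2 /\
  forall z x, inZ z -> inZ x -> box z x -> R2 x z -> R1 x z.

(* Convergence in the order topology of (D, ≺): the open rays
   {A | A0 ≺ A} and {A | A ≺ B0} (A0, B0 in D) form a subbasis, so a
   sequence converges to R0 iff it eventually enters every open ray
   containing R0. *)
Definition order_converges (D : pref -> Prop) (Rn : nat -> pref) (R0 : pref)
  : Prop :=
  (forall A, D A -> prec A R0 -> exists N, forall n, (N <= n)%nat -> prec A (Rn n)) /\
  (forall B, D B -> prec R0 B -> exists N, forall n, (N <= n)%nat -> prec (Rn n) B).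

From Stdlib Require Import Reals Lra Lia Classical.
From Coquelicot Require Import Coquelicot.
Open Scope R_scope.

(* If R0 strictly preferred p2 to p1, the strictness would survive small perturbations
   (contour sets are closed): some bundle slightly worse than p2 would be strictly
   R0-preferred to some bundle slightly better than p1.  Strict R0-preferences between
   fixed bundles are eventually shared by the Rn, which contradicts the Rn-indifference
   of p1n and p2n for large n.

   That persistence follows from order convergence once two preferences of the domain
   are always comparable, and this is where single crossing enters.  Suppose A weakly
   prefers x to z (x < z) while B does not, and B weakly prefers x' to z' while A does
   not.  Fix a monotone path through Z; along it, A's indifference point with z comes
   after B's for (x, z) and before it for (x', z').  Deforming (x, z) continuously into
   (x', z'), the two indifference points must meet, and then the A- and B-indifference
   sets through z share two distinct points. *)

Ltac real_cases :=
  unfold Rabs, Rmax, Rmin in *;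
  repeat match goal with
  | |- context [Rcase_abs ?x] => destruct (Rcase_abs x)
  | H : context [Rcase_abs ?x] |- _ => destruct (Rcase_abs x)
  | |- context [Rle_dec ?x ?y] => destruct (Rle_dec x y)
  | H : context [Rle_dec ?x ?y] |- _ => destruct (Rle_dec x y)
  end; lra.

Lemma closed_compl_locally (S : R * R -> Prop) (x : R * R) :
  closed S -> ~ S x -> locally x (fun y => ~ S y).
Proof. intros HS Hx. apply NNPP; intro H. exact (Hx (HS x H)). Qed.

Lemma locally_box (x : R * R) (e : R) : 0 < e ->
  locally x (fun y => Rabs (fst y - fst x) < e /\ Rabs (snd y - snd x) < e).
Proof. intros He. exists (mkposreal e He). intros y [H1 H2]. split; [exact H1 | exact H2]. Qed.

Lemma locally_box_inv (x : R * R) (S : R * R -> Prop) : locally x S ->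
  exists e, 0 < e /\
    forall y, Rabs (fst y - fst x) < e -> Rabs (snd y - snd x) < e -> S y.
Proof.
  intros [e He]. exists e. split; [apply cond_pos|].
  intros y H1 H2. apply He. split; assumption.
Qed.

Lemma continuous_pair (f g : R -> R) (l : R) :
  continuous f l -> continuous g l -> continuous (fun m => (f m, g m)) l.
Proof.
  intros Hf Hg P [e HP].
  change (locally l (fun m => P (f m, g m))).
  apply (filter_imp (fun m => ball (f l) e (f m) /\ ball (g l) e (g m))).
  - intros m Hm. apply HP. exact Hm.
  - apply filter_and; [apply Hf | apply Hg]; apply locally_ball.
Qed.

Lemma interval_closed_cover_meet (a b : R) (P Q : R -> Prop) :
  a <= b -> P a -> Q b ->
  (forall l, a <= l <= b -> P l \/ Q l) ->
  (forall l, a <= l <= b -> ~ P l -> locally l (fun m => a <= m <= b -> ~ P m)) ->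
  (forall l, a <= l <= b -> ~ Q l -> locally l (fun m => a <= m <= b -> ~ Q m)) ->
  exists l, a <= l <= b /\ P l /\ Q l.
Proof.
  intros Hab Pa Qb Hcover HPc HQc.
  set (E := fun l => a <= l <= b /\ P l).
  destruct (completeness E) as [m [Hub Hlub]].
  { exists b. intros l Hl. apply Hl. }
  { exists a. split; [lra | exact Pa]. }
  assert (Ham : a <= m) by (apply Hub; split; [lra | exact Pa]).
  assert (Hmb : m <= b) by (apply Hlub; intros l Hl; apply Hl).
  assert (Pm : P m).
  { apply NNPP; intro Hn. destruct (HPc m (conj Ham Hmb) Hn) as [d Hd].
    assert (Hbound : is_upper_bound E (m - d)).
    { intros l [Hl Pl]. destruct (Rle_lt_dec l (m - d)) as [|Hlt]; [assumption|].
      exfalso. assert (l <= m) by (apply Hub; split; assumption).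
      apply (Hd l); [change (Rabs (l - m) < d); real_cases | exact Hl | exact Pl]. }
    pose proof (Hlub _ Hbound). pose proof (cond_pos d). lra. }
  exists m. split; [lra|]. split; [exact Pm|].
  destruct (Rle_lt_or_eq_dec m b Hmb) as [Hlt | <-]; [|exact Qb].
  apply NNPP; intro Hn. destruct (HQc m (conj Ham Hmb) Hn) as [d Hd].
  pose proof (cond_pos d).
  set (l := m + Rmin d (b - m) / 2).
  assert (Hl : m < l <= b /\ Rabs (l - m) < d) by (unfold l; real_cases).
  assert (Hnl : ~ Q l) by (apply (Hd l); [exact (proj2 Hl) | lra]).
  destruct (Hcover l) as [Pl | Ql]; [lra | | contradiction].
  assert (l <= m) by (apply Hub; split; [lra | exact Pl]). lra.
Qed.

Definition lerp (u v l : R) : R := u + l * (v - u).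

Lemma lerp_0 u v : lerp u v 0 = u.
Proof. unfold lerp; ring. Qed.

Lemma lerp_1 u v : lerp u v 1 = v.
Proof. unfold lerp; ring. Qed.

Lemma lerp_const u l : lerp u u l = u.
Proof. unfold lerp; ring. Qed.

Lemma lerp_le u v u' v' l : 0 <= l <= 1 -> u <= u' -> v <= v' -> lerp u v l <= lerp u' v' l.
Proof.
  unfold lerp. intros Hl Hu Hv.
  assert (0 <= (1 - l) * (u' - u)) by (apply Rmult_le_pos; lra).
  assert (0 <= l * (v' - v)) by (apply Rmult_le_pos; lra).
  nra.
Qed.

Lemma lerp_lt u v u' v' l : 0 <= l <= 1 -> u < u' -> v < v' -> lerp u v l < lerp u' v' l.
Proof.
  unfold lerp. intros Hl Hu Hv.
  assert (0 <= (1 - l) * (u' - u)) by (apply Rmult_le_pos; lra).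
  destruct (Req_dec l 0) as [-> | Hl0]; [lra|].
  assert (0 < l * (v' - v)) by (apply Rmult_lt_0_compat; lra).
  nra.
Qed.

Lemma continuous_lerp u v l : continuous (lerp u v) l.
Proof.
  apply (continuous_plus (fun _ => u) (fun m => m * (v - u))); [apply continuous_const|].
  apply (continuous_mult (fun m => m) (fun _ => v - u)); [apply continuous_id | apply continuous_const].
Qed.

(* The hook from [t] runs down the segment from (t, 1) to (t, 0) and then right along
   q = 0, parametrised by arc length [s]. *)
Definition hook (t s : R) : pt := (t + Rmax (s - 1) 0, 1 - Rmin s 1).

Lemma hook_inZ t s : 0 <= t -> 0 <= s -> inZ (hook t s).
Proof. intros. unfold hook, inZ; simpl; real_cases. Qed.

Lemma continuous_hook t s : continuous (hook t) s.
Proof.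
  apply filterlim_locally. intros e. exists e. intros s' Hs'.
  change (Rabs (s' - s) < e) in Hs'.
  split; [change (Rabs (fst (hook t s') - fst (hook t s)) < e)
         | change (Rabs (snd (hook t s') - snd (hook t s)) < e)];
  unfold hook; simpl; pose proof (cond_pos e); real_cases.
Qed.

Lemma continuous_hook_base s t : continuous (fun t' => hook t' s) t.
Proof.
  apply (continuous_pair (fun t' => t' + Rmax (s - 1) 0) (fun _ => 1 - Rmin s 1));
    [|apply continuous_const].
  apply (continuous_plus (fun t' => t') (fun _ => Rmax (s - 1) 0));
    [apply continuous_id | apply continuous_const].
Qed.

Section ClassicalPreference.

Variable Rl : pref.
Hypothesis HRl : classical Rl.

Lemma pref_inZ x y : Rl x y -> inZ x /\ inZ y.
Proof. apply HRl. Qed.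

Lemma pref_total x y : inZ x -> inZ y -> Rl x y \/ Rl y x.
Proof. apply HRl. Qed.

Lemma pref_trans x y z : Rl x y -> Rl y z -> Rl x z.
Proof. apply HRl. Qed.

Lemma pref_refl x : inZ x -> Rl x x.
Proof. intro Hx. now destruct (pref_total x x Hx Hx). Qed.

Lemma lower_contour_closed z : inZ z -> closed (fun x : R * R => Rl x z).
Proof. apply HRl. Qed.

Lemma upper_contour_closed z : inZ z -> closed (fun x : R * R => Rl z x).
Proof. apply HRl. Qed.

Lemma strict_of_not_pref x y : inZ x -> inZ y -> ~ Rl y x -> strict Rl x y.
Proof. intros Hx Hy Hyx. split; [|exact Hyx]. now destruct (pref_total x y Hx Hy). Qed.

Lemma strict_pref_trans x y z : strict Rl x y -> Rl y z -> strict Rl x z.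
Proof.
  intros [Hxy Hyx] Hyz. split; [exact (pref_trans x y z Hxy Hyz)|].
  intro Hzx. exact (Hyx (pref_trans y z x Hyz Hzx)).
Qed.

Lemma pref_strict_trans x y z : Rl x y -> strict Rl y z -> strict Rl x z.
Proof.
  intros Hxy [Hyz Hzy]. split; [exact (pref_trans x y z Hxy Hyz)|].
  intro Hzx. exact (Hzy (pref_trans z x y Hzx Hxy)).
Qed.

Lemma strict_through m x y : inZ m -> inZ x -> inZ y -> ~ Rl m x -> ~ Rl y m -> strict Rl x y.
Proof.
  intros Hm Hx Hy Hmx Hym. apply (strict_pref_trans x m y).
  - exact (strict_of_not_pref x m Hx Hm Hmx).
  - exact (proj1 (strict_of_not_pref m y Hm Hy Hym)).
Qed.

Lemma strict_q_mono t q q' : inZ (t, q) -> inZ (t, q') -> q' < q -> strict Rl (t, q) (t, q').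
Proof. destruct HRl as (_ & _ & _ & _ & Hq & _). intros; now apply Hq. Qed.

Lemma strict_t_mono t t' q : inZ (t, q) -> inZ (t', q) -> t < t' -> strict Rl (t, q) (t', q).
Proof. destruct HRl as (_ & _ & _ & Ht & _). intros; now apply Ht. Qed.

Lemma pref_q_mono t q q' : inZ (t, q) -> inZ (t, q') -> q' <= q -> Rl (t, q) (t, q').
Proof.
  intros H H' Hq. destruct (Rle_lt_or_eq_dec q' q Hq) as [Hlt | ->].
  - exact (proj1 (strict_q_mono t q q' H H' Hlt)).
  - exact (pref_refl _ H).
Qed.

Lemma pref_t_mono t t' q : inZ (t, q) -> inZ (t', q) -> t <= t' -> Rl (t, q) (t', q).
Proof.
  intros H H' Ht. destruct (Rle_lt_or_eq_dec t t' Ht) as [Hlt | ->].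
  - exact (proj1 (strict_t_mono t t' q H H' Hlt)).
  - exact (pref_refl _ H).
Qed.

Lemma pref_of_dominates x y :
  inZ x -> inZ y -> fst x <= fst y -> snd y <= snd x -> Rl x y.
Proof.
  destruct x as [a b], y as [c d]; simpl. intros Hx Hy Hac Hdb.
  assert (Hm : inZ (a, d)) by (destruct Hx, Hy; split; simpl in *; lra).
  apply (pref_trans _ (a, d)); [apply pref_q_mono | apply pref_t_mono]; assumption.
Qed.

Lemma strict_of_dominates x y :
  inZ x -> inZ y -> fst x <= fst y -> snd y <= snd x -> x <> y -> strict Rl x y.
Proof.
  destruct x as [a b], y as [c d]; simpl. intros Hx Hy Hac Hdb Hne.
  assert (Hm : inZ (a, d)) by (destruct Hx, Hy; split; simpl in *; lra).
  destruct (Rle_lt_or_eq_dec d b Hdb) as [Hlt | ->].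
  - apply (strict_pref_trans _ (a, d)); [apply strict_q_mono | apply pref_t_mono]; assumption.
  - destruct (Rle_lt_or_eq_dec a c Hac) as [Hlt | ->];
      [apply strict_t_mono; assumption | now contradiction Hne].
Qed.

Lemma pref_hook_mono t s s' : 0 <= t -> 0 <= s -> s <= s' -> Rl (hook t s) (hook t s').
Proof.
  intros. apply pref_of_dominates; try (apply hook_inZ; lra); unfold hook; simpl; real_cases.
Qed.

Lemma strict_hook_mono t s s' : 0 <= t -> 0 <= s -> s < s' -> strict Rl (hook t s) (hook t s').
Proof.
  intros. apply strict_of_dominates; try (apply hook_inZ; lra); try (unfold hook; simpl; real_cases).
  unfold hook; intro E; injection E; real_cases.
Qed.

Lemma hook_indiff_exists t v : inZ v -> 0 <= t <= fst v -> exists s, 0 <= s /\ indiff Rl (hook t s) v.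
Proof.
  intros Hv Ht. pose proof Hv as [Hv1 Hv2].
  destruct (interval_closed_cover_meet 0 (fst v + 1)
              (fun s => Rl (hook t s) v) (fun s => Rl v (hook t s))) as [s [Hs [H1 H2]]].
  - lra.
  - apply pref_of_dominates; [apply hook_inZ; lra | exact Hv | ..]; unfold hook; simpl; real_cases.
  - apply pref_of_dominates; [exact Hv | apply hook_inZ; lra | ..]; unfold hook; simpl; real_cases.
  - intros s Hs. apply pref_total; [apply hook_inZ; lra | exact Hv].
  - intros s Hs Hn. apply (filter_imp (fun s' => ~ Rl (hook t s') v)); [tauto|].
    apply (continuous_hook t s (fun p => ~ Rl p v)).
    exact (closed_compl_locally _ _ (lower_contour_closed v Hv) Hn).
  - intros s Hs Hn. apply (filter_imp (fun s' => ~ Rl v (hook t s'))); [tauto|].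
    apply (continuous_hook t s (fun p => ~ Rl v p)).
    exact (closed_compl_locally _ _ (upper_contour_closed v Hv) Hn).
  - exists s. split; [lra | split; assumption].
Qed.

Lemma strict_hook_before t s r v :
  0 <= t -> 0 <= s -> s < r -> indiff Rl (hook t r) v -> strict Rl (hook t s) v.
Proof.
  intros Ht Hs Hsr [Hrv _]. apply (strict_pref_trans _ (hook t r)); [apply strict_hook_mono; lra | exact Hrv].
Qed.

Lemma strict_hook_after t r s v :
  0 <= t -> 0 <= r -> r < s -> indiff Rl (hook t r) v -> strict Rl v (hook t s).
Proof.
  intros Ht Hr Hrs [_ Hvr]. apply (pref_strict_trans _ (hook t r)); [exact Hvr | apply strict_hook_mono; lra].
Qed.

Lemma strict_between x y : strict Rl x y -> exists m, inZ m /\ strict Rl x m /\ strict Rl m y.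
Proof.
  intros Hxy. destruct (pref_inZ x y (proj1 Hxy)) as [Hx Hy].
  destruct (hook_indiff_exists 0 x Hx) as [r [Hr Ix]]; [destruct Hx; lra|].
  destruct (hook_indiff_exists 0 y Hy) as [r' [Hr' Iy]]; [destruct Hy; lra|].
  assert (Hlt : r < r').
  { destruct (Rlt_le_dec r r') as [|Hle]; [assumption|]. exfalso. apply (proj2 Hxy).
    apply (pref_trans y (hook 0 r')); [apply Iy|].
    apply (pref_trans _ (hook 0 r)); [apply pref_hook_mono; lra | apply Ix]. }
  exists (hook 0 ((r + r') / 2)). split; [apply hook_inZ; lra|]. split.
  - apply (pref_strict_trans x (hook 0 r)); [apply Ix | apply strict_hook_mono; lra].
  - apply (strict_hook_before 0 _ r'); [lra | lra | lra | exact Iy].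
Qed.

Lemma strict_separated (x y : R * R) : strict Rl x y ->
  exists m, inZ m /\ locally x (fun x' => ~ Rl m x') /\ locally y (fun y' => ~ Rl y' m).
Proof.
  intros Hxy. destruct (strict_between x y Hxy) as [m [Hm [Hxm Hmy]]].
  exists m. split; [exact Hm | split].
  - exact (closed_compl_locally _ _ (upper_contour_closed m Hm) (proj2 Hxm)).
  - exact (closed_compl_locally _ _ (lower_contour_closed m Hm) (proj2 Hmy)).
Qed.

Lemma strict_locally (x y : R * R) : strict Rl x y ->
  exists e, 0 < e /\ forall x' y', inZ x' -> inZ y' ->
    Rabs (fst x' - fst x) < e -> Rabs (snd x' - snd x) < e ->
    Rabs (fst y' - fst y) < e -> Rabs (snd y' - snd y) < e -> strict Rl x' y'.
Proof.
  intros Hxy. destruct (strict_separated x y Hxy) as [m [Hm [Lx Ly]]].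
  destruct (locally_box_inv x _ Lx) as [e1 [He1 H1]].
  destruct (locally_box_inv y _ Ly) as [e2 [He2 H2]].
  exists (Rmin e1 e2). split; [real_cases|].
  intros x' y' Hx' Hy' ? ? ? ?.
  apply (strict_through m); [assumption | assumption | assumption | apply H1 | apply H2]; real_cases.
Qed.

End ClassicalPreference.

(* Along the hook from [t], A's indifference point with [z] lies strictly beyond B's. *)
Definition hook_separates (A B : pref) (t : R) (z : pt) : Prop :=
  exists s, 0 <= s /\ strict A (hook t s) z /\ strict B z (hook t s).

Lemma hook_separates_asym A B t z : classical A -> classical B -> 0 <= t ->
  hook_separates A B t z -> ~ hook_separates B A t z.
Proof.
  intros HA HB Ht [s [Hs [HAs HBs]]] [s' [Hs' [HBs' HAs']]].
  destruct (Rle_lt_dec s s') as [Hle | Hlt].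
  - apply (proj2 (strict_pref_trans B HB _ _ _ HBs' (proj1 HBs))).
    apply (pref_hook_mono B HB); lra.
  - apply (proj2 (strict_pref_trans A HA _ _ _ HAs (proj1 HAs'))).
    apply (pref_hook_mono A HA); lra.
Qed.

Lemma hook_separates_of_indiff A B t z r r' : classical A -> classical B ->
  0 <= t -> 0 <= r' -> r' < r -> indiff A (hook t r) z -> indiff B (hook t r') z ->
  hook_separates A B t z.
Proof.
  intros HA HB Ht Hr' Hlt IA IB. exists ((r + r') / 2). split; [lra | split].
  - apply (strict_hook_before A HA t _ r); [lra | lra | lra | exact IA].
  - apply (strict_hook_after B HB t r'); [lra | lra | lra | exact IB].
Qed.

Lemma hook_separates_dichotomy A B t z : classical A -> classical B -> single_crossing A B ->
  inZ z -> 0 <= t < fst z -> 0 < snd z ->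
  hook_separates A B t z \/ hook_separates B A t z.
Proof.
  intros HA HB HAB Hz Ht Hq.
  destruct (hook_indiff_exists A HA t z Hz) as [r [Hr IA]]; [lra|].
  destruct (hook_indiff_exists B HB t z Hz) as [r' [Hr' IB]]; [lra|].
  destruct (total_order_T r r') as [[Hlt | <-] | Hgt].
  - right. exact (hook_separates_of_indiff B A t z r' r HB HA (proj1 Ht) Hr Hlt IB IA).
  - exfalso.
    assert (Heq : hook t r = z).
    { apply (HAB z z (hook t r) z); try assumption; [apply hook_inZ; lra | |];
        split; [apply (pref_refl A HA) | apply (pref_refl A HA) | apply (pref_refl B HB)
               | apply (pref_refl B HB)]; exact Hz. }
    rewrite <- Heq in Ht, Hq. unfold hook in Ht, Hq; simpl in Ht, Hq. real_cases.
  - left. exact (hook_separates_of_indiff A B t z r r' HA HB (proj1 Ht) Hr' Hgt IA IB).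
Qed.

Lemma hook_separates_of_pref A B x z : classical A -> classical B -> inZ x -> inZ z ->
  fst x < fst z -> A x z -> ~ B x z -> hook_separates A B (fst x) z.
Proof.
  intros HA HB Hx Hz Hlt HAxz HBxz. pose proof Hx as [Ht Hq].
  assert (Hxhook : hook (fst x) (1 - snd x) = x).
  { destruct x as [t q]; unfold hook; simpl in *; f_equal; real_cases. }
  destruct (hook_indiff_exists A HA (fst x) z Hz) as [r [Hr IA]]; [lra|].
  destruct (hook_indiff_exists B HB (fst x) z Hz) as [r' [Hr' IB]]; [lra|].
  apply (hook_separates_of_indiff A B (fst x) z r r'); try assumption.
  assert (r' < 1 - snd x).
  { destruct (Rlt_le_dec r' (1 - snd x)) as [|Hle]; [assumption|]. exfalso.
    apply HBxz. rewrite <- Hxhook.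
    apply (pref_trans B HB _ (hook (fst x) r')); [apply (pref_hook_mono B HB); lra | apply IB]. }
  assert (1 - snd x <= r).
  { destruct (Rlt_le_dec r (1 - snd x)) as [Hlt' |]; [|assumption]. exfalso.
    apply (proj2 (strict_hook_after A HA (fst x) r (1 - snd x) z Ht Hr Hlt' IA)).
    rewrite Hxhook. exact HAxz. }
  lra.
Qed.

Lemma hook_separates_locally A B (T : R -> R) (Zp : R -> R * R) l :
  classical A -> classical B -> continuous T l -> continuous Zp l ->
  hook_separates A B (T l) (Zp l) ->
  locally l (fun m => 0 <= T m -> inZ (Zp m) -> hook_separates A B (T m) (Zp m)).
Proof.
  intros HA HB HT HZ [s [Hs [SA SB]]].
  destruct (strict_separated A HA _ _ SA) as [mA [HmA [LhA LzA]]].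
  destruct (strict_separated B HB _ _ SB) as [mB [HmB [LzB LhB]]].
  assert (Hh : continuous (fun m => hook (T m) s) l).
  { apply (continuous_comp T (fun t => hook t s)); [exact HT | apply continuous_hook_base]. }
  assert (NhA : locally l (fun m => ~ A mA (hook (T m) s))) by apply (Hh _ LhA).
  assert (NhB : locally l (fun m => ~ B (hook (T m) s) mB)) by apply (Hh _ LhB).
  assert (NzA : locally l (fun m => ~ A (Zp m) mA)) by apply (HZ _ LzA).
  assert (NzB : locally l (fun m => ~ B mB (Zp m))) by apply (HZ _ LzB).
  generalize (filter_and _ _ (filter_and _ _ NhA NhB) (filter_and _ _ NzA NzB)).
  apply filter_imp. intros m [[HhA HhB] [HzA HzB]] Htm Hzm.
  exists s. split; [exact Hs | split].
  - apply (strict_through A HA mA); [exact HmA | apply hook_inZ; lra | exact Hzm | exact HhA | exact HzA].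
  - apply (strict_through B HB mB); [exact HmB | exact Hzm | apply hook_inZ; lra | exact HzB | exact HhB].
Qed.

Lemma hook_separates_path A B (T : R -> R) (Zp : R -> R * R) :
  classical A -> classical B -> single_crossing A B ->
  (forall l, continuous T l) -> (forall l, continuous Zp l) ->
  (forall l, 0 <= l <= 1 -> 0 <= T l < fst (Zp l) /\ inZ (Zp l) /\ 0 < snd (Zp l)) ->
  hook_separates A B (T 0) (Zp 0) -> ~ hook_separates B A (T 1) (Zp 1).
Proof.
  intros HA HB HAB HT HZ Hdom H0 H1.
  set (P := fun l => hook_separates A B (T l) (Zp l)).
  set (Q := fun l => hook_separates B A (T l) (Zp l)).
  assert (Hcover : forall l, 0 <= l <= 1 -> P l \/ Q l).
  { intros l Hl. destruct (Hdom l Hl) as (Ht & Hz & Hq).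
    exact (hook_separates_dichotomy A B (T l) (Zp l) HA HB HAB Hz Ht Hq). }
  assert (HPopen : forall l, 0 <= l <= 1 -> P l -> locally l (fun m => 0 <= m <= 1 -> P m)).
  { intros l Hl Pl. generalize (hook_separates_locally A B T Zp l HA HB (HT l) (HZ l) Pl).
    apply filter_imp. intros m Hm Hm01. destruct (Hdom m Hm01) as ([Htm _] & Hzm & _).
    exact (Hm Htm Hzm). }
  assert (HQopen : forall l, 0 <= l <= 1 -> Q l -> locally l (fun m => 0 <= m <= 1 -> Q m)).
  { intros l Hl Ql. generalize (hook_separates_locally B A T Zp l HB HA (HT l) (HZ l) Ql).
    apply filter_imp. intros m Hm Hm01. destruct (Hdom m Hm01) as ([Htm _] & Hzm & _).
    exact (Hm Htm Hzm). }
  destruct (interval_closed_cover_meet 0 1 P Q) as [l [Hl [Pl Ql]]]; [lra | exact H0 | exact H1 | exact Hcover | | |].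
  - intros l Hl HnP. destruct (Hcover l Hl) as [Pl | Ql]; [contradiction|].
    generalize (HQopen l Hl Ql). apply filter_imp. intros m Hm Hm01.
    exact (hook_separates_asym B A _ _ HB HA (proj1 (proj1 (Hdom m Hm01))) (Hm Hm01)).
  - intros l Hl HnQ. destruct (Hcover l Hl) as [Pl | Ql]; [|contradiction].
    generalize (HPopen l Hl Pl). apply filter_imp. intros m Hm Hm01.
    exact (hook_separates_asym A B _ _ HA HB (proj1 (proj1 (Hdom m Hm01))) (Hm Hm01)).
  - exact (hook_separates_asym A B _ _ HA HB (proj1 (proj1 (Hdom l Hl))) Pl Ql).
Qed.

Lemma pref_crossing A B x z x' z' : classical A -> classical B -> single_crossing A B ->
  inZ x -> inZ z -> inZ x' -> inZ z' -> ltZ x z -> ltZ x' z' ->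
  A x z -> ~ B x z -> B x' z' -> ~ A x' z' -> False.
Proof.
  intros HA HB HAB Hx Hz Hx' Hz' Hxz Hxz' HAxz HBxz HBxz' HAxz'.
  set (T := lerp (fst x) (fst x')).
  set (Zp := fun l => (lerp (fst z) (fst z') l, lerp (snd z) (snd z') l)).
  apply (hook_separates_path A B T Zp HA HB HAB).
  - intro l. apply continuous_lerp.
  - intro l. apply continuous_pair; apply continuous_lerp.
  - intros l Hl. unfold T, Zp, inZ, ltZ in *; simpl.
    destruct Hx, Hz, Hx', Hz', Hxz, Hxz'.
    pose proof (lerp_le 0 0 (fst x) (fst x') l Hl ltac:(lra) ltac:(lra)).
    pose proof (lerp_lt (fst x) (fst x') (fst z) (fst z') l Hl ltac:(lra) ltac:(lra)).
    pose proof (lerp_le 0 0 (fst z) (fst z') l Hl ltac:(lra) ltac:(lra)).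
    pose proof (lerp_le (snd z) (snd z') 1 1 l Hl ltac:(lra) ltac:(lra)).
    pose proof (lerp_lt 0 0 (snd z) (snd z') l Hl ltac:(lra) ltac:(lra)).
    rewrite !lerp_const in *. repeat split; lra.
  - unfold T, Zp. rewrite !lerp_0, <- surjective_pairing.
    exact (hook_separates_of_pref A B x z HA HB Hx Hz (proj1 Hxz) HAxz HBxz).
  - unfold T, Zp. rewrite !lerp_1, <- surjective_pairing.
    exact (hook_separates_of_pref B A x' z' HB HA Hx' Hz' (proj1 Hxz') HBxz' HAxz').
Qed.

Lemma prec_pref_lt A B x z : prec A B -> inZ x -> inZ z -> ltZ x z -> B x z -> A x z.
Proof. intros [_ HAB] Hx Hz Hxz. apply HAB; [exact Hz | exact Hx | right; exact Hxz]. Qed.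

Section RichDomain.

Variable D : pref -> Prop.
Hypothesis HD : rich_single_crossing D.

Lemma domain_classical Rl : D Rl -> classical Rl.
Proof. apply HD. Qed.

Lemma prec_of_witness A B x z : D A -> D B -> inZ x -> inZ z -> ltZ x z ->
  A x z -> ~ B x z -> prec A B.
Proof.
  intros HDA HDB Hx Hz Hxz HAxz HBxz. destruct HD as [Hcl [Hsc _]].
  assert (HAB : A <> B) by (intros <-; contradiction).
  split; [exact HAB|].
  intros z' x' Hz' Hx' [-> | Hxz'] HBxz'; [exact (pref_refl A (Hcl A HDA) z' Hz')|].
  apply NNPP; intro HAxz'.
  exact (pref_crossing A B x z x' z' (Hcl A HDA) (Hcl B HDB) (Hsc A B HDA HDB HAB)
           Hx Hz Hx' Hz' Hxz Hxz' HAxz HBxz HBxz' HAxz').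
Qed.

Variables (Rn : nat -> pref) (R0 : pref).
Hypotheses (HDn : forall n, D (Rn n)) (HD0 : D R0) (Hconv : order_converges D Rn R0).

Lemma eventually_strict_lt x y : inZ x -> inZ y -> ltZ x y -> strict R0 x y ->
  eventually (fun n => strict (Rn n) x y).
Proof.
  destruct x as [a b], y as [c d]. intros Hx Hy [Hac Hbd] Sxy. simpl in *.
  pose proof Hx as [Ha Hb]; pose proof Hy as [Hc Hd]; simpl in *.
  destruct (strict_locally R0 (domain_classical R0 HD0) _ _ Sxy) as [e0 [He0 Hloc]].
  set (e := Rmin e0 (c - a) / 4).
  assert (He : 0 < e /\ e < e0 /\ 4 * e <= c - a) by (unfold e; real_cases).
  (* B is indifferent between x and a slightly cheaper y1 but strictly dislikes the
     dearer x1, while R0 still prefers x1 to y1; so R0 ≺ B, and eventually Rn n ≺ B. *)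
  set (x1 := (a + e, b)). set (y1 := (c - e, d)).
  assert (Hx1 : inZ x1) by (unfold x1, inZ; simpl; lra).
  assert (Hy1 : inZ y1) by (unfold y1, inZ; simpl; lra).
  destruct HD as [Hcl [_ Hrich]].
  destruct (Hrich (a, b) y1 Hx Hy1) as [B [HDB IB]]; [unfold y1, ltZ; simpl; lra|].
  assert (HB := Hcl B HDB).
  assert (Hprec : prec R0 B).
  { apply (prec_of_witness R0 B x1 y1 HD0 HDB Hx1 Hy1); [unfold x1, y1, ltZ; simpl; lra | |].
    - apply (Hloc x1 y1 Hx1 Hy1); unfold x1, y1; simpl; real_cases.
    - intro HBx1y1.
      apply (proj2 (strict_of_dominates B HB (a, b) x1 Hx Hx1 ltac:(simpl; lra) ltac:(simpl; lra)
                      ltac:(intro E; injection E; lra))).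
      exact (pref_trans B HB _ y1 _ HBx1y1 (proj2 IB)). }
  apply (filter_imp (fun n => prec (Rn n) B)); [|exact (proj2 Hconv B HDB Hprec)].
  intros n Hn. assert (Hcn := Hcl _ (HDn n)).
  apply (pref_strict_trans (Rn n) Hcn _ y1).
  - apply (prec_pref_lt _ _ _ _ Hn Hx Hy1); [unfold y1, ltZ; simpl; lra | apply IB].
  - apply (strict_of_dominates (Rn n) Hcn); [exact Hy1 | exact Hy | simpl; lra | simpl; lra |].
    intro E; injection E; lra.
Qed.

Lemma eventually_strict_gt x y : inZ x -> inZ y -> ltZ y x -> strict R0 x y ->
  eventually (fun n => strict (Rn n) x y).
Proof.
  destruct x as [a b], y as [c d]. intros Hx Hy [Hca Hdb] Sxy. simpl in *.
  pose proof Hx as [Ha Hb]; pose proof Hy as [Hc Hd]; simpl in *.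
  destruct (strict_locally R0 (domain_classical R0 HD0) _ _ Sxy) as [e0 [He0 Hloc]].
  set (e := Rmin e0 (b - d) / 4).
  assert (He : 0 < e /\ e < e0 /\ 4 * e <= b - d) by (unfold e; real_cases).
  (* A is indifferent between the perturbed y1 and x1, which R0 strictly ranks the other
     way; so A ≺ R0, and eventually A ≺ Rn n, while A strictly prefers x to y. *)
  set (x1 := (a + e, b)). set (y1 := (c, d + e)).
  assert (Hx1 : inZ x1) by (unfold x1, inZ; simpl; lra).
  assert (Hy1 : inZ y1) by (unfold y1, inZ; simpl; lra).
  assert (S1 : strict R0 x1 y1) by (apply (Hloc x1 y1 Hx1 Hy1); unfold x1, y1; simpl; real_cases).
  destruct HD as [Hcl [_ Hrich]].
  destruct (Hrich y1 x1 Hy1 Hx1) as [A [HDA IA]]; [unfold x1, y1, ltZ; simpl; lra|].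
  assert (HA := Hcl A HDA).
  assert (Hprec : prec A R0).
  { apply (prec_of_witness A R0 y1 x1 HDA HD0 Hy1 Hx1); [unfold x1, y1, ltZ; simpl; lra | apply IA | apply S1]. }
  apply (filter_imp (fun n => prec A (Rn n))); [|exact (proj1 Hconv A HDA Hprec)].
  intros n Hn. assert (Hcn := Hcl _ (HDn n)).
  apply (strict_of_not_pref (Rn n) Hcn _ _ Hx Hy). intro Hyx.
  assert (Sxx1 : strict A (a, b) x1).
  { apply (strict_of_dominates A HA); [exact Hx | exact Hx1 | simpl; lra | simpl; lra |].
    intro E; injection E; lra. }
  assert (Sy1y : strict A y1 (c, d)).
  { apply (strict_of_dominates A HA); [exact Hy1 | exact Hy | simpl; lra | simpl; lra |].
    intro E; injection E; lra. }
  apply (proj2 (strict_pref_trans A HA _ _ _ (strict_pref_trans A HA _ _ _ Sxx1 (proj2 IA)) (proj1 Sy1y))).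
  apply (prec_pref_lt _ _ _ _ Hn Hy Hx); [split; simpl; lra | exact Hyx].
Qed.

Lemma eventually_strict x y : inZ x -> inZ y -> strict R0 x y ->
  eventually (fun n => strict (Rn n) x y).
Proof.
  intros Hx Hy Sxy. pose proof (domain_classical R0 HD0) as H0.
  assert (Hne : x <> y) by (intros <-; exact (proj2 Sxy (pref_refl R0 H0 x Hx))).
  assert (Hnot_dominated : ~ (fst y <= fst x /\ snd x <= snd y)).
  { intros [H1 H2]. exact (proj2 Sxy (pref_of_dominates R0 H0 y x Hy Hx H1 H2)). }
  destruct (Rle_lt_dec (fst x) (fst y)) as [Hac | Hca];
    destruct (Rle_lt_dec (snd y) (snd x)) as [Hdb | Hbd].
  - apply filter_forall; intro n.
    exact (strict_of_dominates (Rn n) (domain_classical _ (HDn n)) x y Hx Hy Hac Hdb Hne).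
  - apply eventually_strict_lt; [exact Hx | exact Hy | split | exact Sxy]; [|exact Hbd].
    destruct (Rle_lt_or_eq_dec _ _ Hac) as [|Heq]; [assumption|]. exfalso; apply Hnot_dominated; lra.
  - apply eventually_strict_gt; [exact Hx | exact Hy | split | exact Sxy]; [exact Hca|].
    destruct (Rle_lt_or_eq_dec _ _ Hdb) as [|Heq]; [assumption|]. exfalso; apply Hnot_dominated; lra.
  - exfalso; apply Hnot_dominated; lra.
Qed.

Lemma pref_limit un vn u v :
  (forall n, inZ (un n)) -> (forall n, inZ (vn n)) -> inZ u -> inZ v ->
  filterlim un eventually (locally u) -> filterlim vn eventually (locally v) ->
  (forall n, Rn n (un n) (vn n)) -> R0 u v.
Proof.
  intros Hun Hvn Hu Hv Lu Lv HR. pose proof (domain_classical R0 HD0) as H0.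
  apply NNPP; intro Hn.
  destruct (strict_locally R0 H0 v u (strict_of_not_pref R0 H0 v u Hv Hu Hn)) as [e [He Hloc]].
  destruct u as [a b], v as [c d]. pose proof Hu as [Ha Hb]; pose proof Hv as [Hc Hd]; simpl in *.
  set (h := e / 2). assert (Hh : 0 < h) by (unfold h; lra).
  set (x := (c + h, Rmax (d - h) 0)). set (y := (Rmax (a - h) 0, Rmin (b + h) 1)).
  assert (Hx : inZ x) by (unfold x, inZ; simpl; real_cases).
  assert (Hy : inZ y) by (unfold y, inZ; simpl; real_cases).
  assert (Sxy : strict R0 x y) by (apply (Hloc x y Hx Hy); unfold x, y, h; simpl; real_cases).
  destruct (eventually_strict x y Hx Hy Sxy) as [N1 HN1].
  destruct (Lu _ (locally_box (a, b) h Hh)) as [N2 HN2].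
  destruct (Lv _ (locally_box (c, d) h Hh)) as [N3 HN3].
  set (n := Nat.max N1 (Nat.max N2 N3)).
  destruct (HN2 n ltac:(unfold n; lia)) as [U1 U2].
  destruct (HN3 n ltac:(unfold n; lia)) as [V1 V2].
  simpl in U1, U2, V1, V2.
  pose proof (Hun n) as [? ?]; pose proof (Hvn n) as [? ?].
  assert (Hcn := domain_classical _ (HDn n)).
  apply (proj2 (HN1 n ltac:(unfold n; lia))).
  apply (pref_trans _ Hcn _ (un n)).
  - apply (pref_of_dominates _ Hcn); [exact Hy | apply Hun | unfold y; simpl; real_cases ..].
  - apply (pref_trans _ Hcn _ (vn n)); [exact (HR n)|].
    apply (pref_of_dominates _ Hcn); [apply Hvn | exact Hx | unfold x; simpl; real_cases ..].
Qed.

End RichDomain.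

Theorem mainTheorem3 (D : pref -> Prop) (Rn : nat -> pref) (R0 : pref)
  (p1n p2n : nat -> R * R) (p1 p2 : R * R) :
  rich_single_crossing D ->
  (forall n, D (Rn n)) -> D R0 ->
  order_converges D Rn R0 ->
  (forall n, inZ (p1n n)) -> (forall n, inZ (p2n n)) ->
  inZ p1 -> inZ p2 ->
  filterlim p1n eventually (locally p1) ->
  filterlim p2n eventually (locally p2) ->
  (forall n, indiff (Rn n) (p1n n) (p2n n)) ->
  indiff R0 p1 p2.
Proof.
  intros HD HDn HD0 Hconv H1n H2n H1 H2 L1 L2 HI. split.
  - exact (pref_limit D HD Rn R0 HDn HD0 Hconv p1n p2n p1 p2 H1n H2n H1 H2 L1 L2
             (fun n => proj1 (HI n))).
  - exact (pref_limit D HD Rn R0 HDn HD0 Hconv p2n p1n p2 p1 H2n H1n H2 H1 L2 L1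
             (fun n => proj2 (HI n))).
Qed.
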